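(* Let $L$ be the combinatorial Laplacian of a connected weighted graph on $N$ vertices, with eigenvalues $\lambda_1\le\cdots\le\lambda_N$, orthonormal eigenvectors $u_1,\dots,u_N$, $U_k=[u_1,\dots,u_k]$ and $\mathbf U_i=\mathrm{span}(u_1,\dots,u_i)$. Let $L_c$ be obtained from $L$ by a single level of Laplacian consistent coarsening into $n$ contraction sets. If, for each $i\le k$, $L_c$ and $L$ are $(\mathbf U_i,\epsilon_i)$-similar, then $$\sum_{i\le k}\epsilon_i\ge\min_{\mathcal P}\mathcal K_n(U_k,\mathcal P),$$ the minimum being the optimal $n$-means cost of the points $U_k(1,:),\dots,U_k(N,:)$ over all partitions $\mathcal P$ into $n$ clusters.
   Context: Single-level Laplacian consistent coarsening: the vertex set is partitioned into contraction sets $\mathcal V_0^{(1)},\dots,\mathcal V_0^{(n)}$, each inducing a connected subgraph; $P\in\mathbb R^{n\times N}$ with $P(r,i)=1/|\mathcal V_0^{(r)}|$ if $v_i\in\mathcal V_0^{(r)}$ and $0$ otherwise; $P^+(i,r)=1$ if $v_i\in\mathcal V_0^{(r)}$ and $0$ otherwise; $L_c=(P^+)^\top LP^+$. $L_c$ and $L$ are $(\mathbf R,\epsilon)$-similar if $\|x-P^+Px\|_L\le\epsilon\|x\|_L$ for all $x\in\mathbf R$, where $\|y\|_L=\sqrt{y^\top Ly}$. For $X\in\mathbb R^{N\times d}$ and a partition $\mathcal P=\{\mathcal S_1,\dots,\mathcal S_m\}$ of the row indices, $\mathcal K_m(X,\mathcal P)=\sum_{z=1}^m\sum_{i,j\in\mathcal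 S_z}\frac{\|X(i,:)-X(j,:)\|_2^2}{2|\mathcal S_z|}$. *)

From HB Require Import structures.
From mathcomp Require Import all_boot all_order all_algebra.
Set Implicit Arguments. Unset Strict Implicit. Unset Printing Implicit Defensive.
Import Order.TTheory GRing.Theory Num.Theory.
Local Open Scope ring_scope.

Section Defs.
Variable R : rcfType.

Definition weighted_graph N (W : 'M[R]_N) : Prop :=
  [/\ forall i j, W i j = W j i, forall i j, 0 <= W i j & forall i, W i i = 0].

Definition edge N (W : 'M[R]_N) : rel 'I_N := fun i j => 0 < W i j.

Definition connected_graph N (W : 'M[R]_N) : Prop :=
  forall i j, connect (edge W) i j.

Definition laplacian N (W : 'M[R]_N) : 'M[R]_N :=
  \matrix_(i, j) ((i == j)%:R * (\sum_(l < N) W i l) - W i j).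

(* Contraction sets V^(r) = { i | part i = r }; they form a partition into n
   nonempty sets, each inducing a connected subgraph. *)
Definition contraction_partition N n (W : 'M[R]_N) (part : 'I_N -> 'I_n) : Prop :=
  (forall r : 'I_n, exists i, part i = r) /\
  (forall i j, part i = part j ->
     connect (fun a b => edge W a b && (part a == part i) && (part b == part i)) i j).

Definition csize N n (part : 'I_N -> 'I_n) (r : 'I_n) : nat := #|[set i | part i == r]|.

Definition Pmat N n (part : 'I_N -> 'I_n) : 'M[R]_(n, N) :=
  \matrix_(r, i) (if part i == r then (csize part r)%:R^-1 else 0).

Definition Pplus N n (part : 'I_N -> 'I_n) : 'M[R]_(N, n) :=
  \matrix_(i, r) (if part i == r then 1 else 0).

Definition Lcoarse N n (L : 'M[R]_N) (part : 'I_N -> 'I_n) : 'M[R]_n :=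
  (Pplus part)^T *m L *m Pplus part.

Definition normL N (L : 'M[R]_N) (y : 'cV[R]_N) : R := Num.sqrt ((y^T *m L *m y) ord0 ord0).

Definition coarse_similar N n (L : 'M[R]_N) (part : 'I_N -> 'I_n) (Rset : 'cV[R]_N -> Prop) (eps : R) : Prop :=
  forall x, Rset x -> normL L (x - Pplus part *m Pmat part *m x) <= eps * normL L x.

Definition span_first N (U : 'M[R]_N) (i : nat) (x : 'cV[R]_N) : Prop :=
  exists c : 'cV[R]_N, (forall j : 'I_N, (i <= j)%N -> c j ord0 = 0) /\ x = U *m c.

(* K_m(X, P) where X = U_k (rows U(v, 0..k-1)) and the partition of row indices
   is given by a cluster assignment f : 'I_N -> 'I_m. *)
Definition kmeans_cost N m (U : 'M[R]_N) (k : nat) (f : 'I_N -> 'I_m) : R :=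
  \sum_(z < m) \sum_(i | f i == z) \sum_(j | f j == z)
     (\sum_(c < N | (c < k)%N) (U i c - U j c) ^+ 2) / (2 * (csize f z)%:R).

End Defs.

From HB Require Import structures.
From mathcomp Require Import all_boot all_order all_algebra.
From mathcomp Require Import ring.
Import Order.TTheory GRing.Theory Num.Theory.

(* Let [Q = P^+ P], which averages a vector over each contraction set. For the
   contraction partition itself, the n-means cost of [U_k] splits over the
   columns as [sum_(c < k) u_c^T (u_c - Q u_c)]. Fix a column [u] with
   eigenvalue [l] and put [y = u - Q u], [s = u^T y >= 0]. Positivity of [L] at
   [y - s u] gives [l s^2 <= y^T L y], and similarity on [span(u_1..u_(c+1))]
   gives [y^T L y <= eps^2 l], so [s <= eps] when [l > 0]. When [l = 0], [u] is
   constant along every edge, hence on every contraction set since these are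
   connected, so [Q u = u] and [s = 0]. *)

Set Implicit Arguments.
Unset Strict Implicit.
Unset Printing Implicit Defensive.
Local Open Scope ring_scope.

Section QuadraticForms.
Variables (R : numDomainType) (N : nat).

Lemma qform_sum (M : 'M[R]_N) (x y : 'cV[R]_N) :
  (x^T *m M *m y) ord0 ord0 = \sum_a \sum_b x a ord0 * M a b * y b ord0.
Proof.
rewrite mxE exchange_big /=; apply: eq_bigr => a _.
by rewrite mxE mulr_suml; apply: eq_bigr => b _; rewrite !mxE.
Qed.

Lemma dot_colC (x y : 'cV[R]_N) : (x^T *m y) ord0 ord0 = (y^T *m x) ord0 ord0.
Proof. by rewrite !mxE; apply: eq_bigr => i _; rewrite !mxE mulrC. Qed.

(* Positivity of the quadratic form at [y - (u^T y) u]. *)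
Lemma eigen_component_qform_le (L : 'M[R]_N) (u y : 'cV[R]_N) (l : R) :
  L^T = L -> L *m u = l *: u -> (u^T *m u) ord0 ord0 = 1 ->
  (forall x : 'cV[R]_N, 0 <= (x^T *m L *m x) ord0 ord0) ->
  l * ((u^T *m y) ord0 ord0) ^+ 2 <= (y^T *m L *m y) ord0 ord0.
Proof.
move=> Ls Lu uu psd; set s := (u^T *m y) ord0 ord0.
have uL : u^T *m L = l *: u^T by rewrite -{1}Ls -trmx_mul Lu linearZ.
have := psd (y - s *: u).
have -> : (y - s *: u)^T = y^T - s *: u^T by apply/matrixP => i j; rewrite !mxE.
rewrite mulmxBl -scalemxAl uL scalerA mulmxBr !mulmxBl.
rewrite -!scalemxAr -!scalemxAl -!mulmxA Lu -!scalemxAr !mxE.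
have -> : \sum_j u^T ord0 j * y j ord0 = s by rewrite /s mxE.
have -> : \sum_j y^T ord0 j * u j ord0 = s by rewrite /s dot_colC mxE.
have -> : \sum_j u^T ord0 j * u j ord0 = 1 by rewrite -uu mxE.
set Y := \sum_j _.
have -> : Y - s * l * s - (s * (l * s) - s * (s * l * 1)) = Y - l * s ^+ 2 by ring.
by rewrite subr_ge0.
Qed.

End QuadraticForms.

Section Laplacian.
Variables (R : rcfType) (N : nat) (W : 'M[R]_N).
Hypothesis hW : weighted_graph W.

Lemma laplacian_qform (x : 'cV[R]_N) :
  (x^T *m laplacian W *m x) ord0 ord0 =
  \sum_a \sum_b W a b * (x a ord0 - x b ord0) ^+ 2 / 2.
Proof.
case: hW => Ws _ _; rewrite qform_sum.
set D := \sum_a \sum_b W a b * x a ord0 ^+ 2.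
set C := \sum_a \sum_b W a b * x a ord0 * x b ord0.
have DT : \sum_a \sum_b W a b * x b ord0 ^+ 2 = D.
  rewrite exchange_big /=; apply: eq_bigr => a _; apply: eq_bigr => b _.
  by rewrite Ws.
transitivity (D - C).
  rewrite -sumrB; apply: eq_bigr => a _.
  transitivity (\sum_b ((a == b)%:R * (x a ord0 ^+ 2 * \sum_l W a l))
                - \sum_b W a b * x a ord0 * x b ord0).
    rewrite -sumrB; apply: eq_bigr => b _; rewrite !mxE.
    by case: eqP => [<-|_]; rewrite ?mul1r ?mul0r; ring.
  congr (_ - _); rewrite (bigD1 a) //= eqxx [X in _ + X]big1 ?addr0.
    by rewrite mul1r mulr_sumr; apply: eq_bigr => b _; ring.
  by move=> b; rewrite eq_sym => /negbTE ->; rewrite mul0r.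
transitivity ((D + \sum_a \sum_b W a b * x b ord0 ^+ 2 - 2 * C) / 2).
  by rewrite DT; field.
rewrite mulr_sumr -big_split -sumrB /= mulr_suml; apply: eq_bigr => a _.
rewrite mulr_sumr -big_split -sumrB /= mulr_suml; apply: eq_bigr => b _.
ring.
Qed.

Lemma laplacian_qform_ge0 (x : 'cV[R]_N) : 0 <= (x^T *m laplacian W *m x) ord0 ord0.
Proof.
case: (hW) => _ W0 _; rewrite laplacian_qform.
apply: sumr_ge0 => a _; apply: sumr_ge0 => b _.
by rewrite divr_ge0 // mulr_ge0 // sqr_ge0.
Qed.

Lemma trmx_laplacian : (laplacian W)^T = laplacian W.
Proof.
case: hW => Ws _ _; apply/matrixP => i j; rewrite !mxE eq_sym Ws.
by case: eqP => [->|]; rewrite ?mul0r.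
Qed.

Lemma laplacian_qform_eq0_edge (x : 'cV[R]_N) :
  (x^T *m laplacian W *m x) ord0 ord0 = 0 ->
  forall a b, edge W a b -> x a ord0 = x b ord0.
Proof.
case: (hW) => _ W0 _; rewrite laplacian_qform => x0 a b Wab.
have term_ge0 a' b' : 0 <= W a' b' * (x a' ord0 - x b' ord0) ^+ 2 / 2.
  by rewrite divr_ge0 // mulr_ge0 // sqr_ge0.
have row_ge0 a' : xpredT a' -> 0 <= \sum_b' W a' b' * (x a' ord0 - x b' ord0) ^+ 2 / 2.
  by move=> _; apply: sumr_ge0 => b' _.
have := psumr_eq0P row_ge0 x0 (i := a) isT.
move/(psumr_eq0P (P := xpredT) (fun b' _ => term_ge0 a b'))/(_ b isT)/eqP.
rewrite mulf_eq0 invr_eq0 pnatr_eq0 orbF mulf_eq0 (gt_eqF Wab) /=.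
by rewrite sqrf_eq0 subr_eq0 => /eqP.
Qed.

End Laplacian.

Lemma connect_invariant (T : finType) (T' : Type) (e : rel T) (g : T -> T') :
  (forall a b, e a b -> g a = g b) -> forall i j, connect e i j -> g i = g j.
Proof.
move=> ge i j /connectP [p]; elim: p i => [|a p IH] i /=; first by move=> _ ->.
by move=> /andP [eia pa] ej; rewrite (ge _ _ eia); apply: IH.
Qed.

Section ClusterAverage.
Variables (R : rcfType) (N m : nat) (f : 'I_N -> 'I_m).

Lemma csize_gt0 (i : 'I_N) : (0 < csize f (f i))%N.
Proof. by rewrite /csize card_gt0; apply/set0Pn; exists i; rewrite inE. Qed.

Lemma sum_cluster_const (z : 'I_m) (c : R) :
  \sum_(j | f j == z) c = c * (csize f z)%:R.
Proof.
rewrite sumr_const /csize cardsE mulr_natr.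
by congr (_ *+ _); apply: eq_card => j; rewrite !inE.
Qed.

Lemma Pplus_PmatE (a b : 'I_N) :
  (Pplus R f *m Pmat R f) a b = (f a == f b)%:R / (csize f (f b))%:R.
Proof.
rewrite mxE (bigD1 (f b)) //= big1 ?addr0.
  by rewrite !mxE eqxx; case: eqP; rewrite ?mul1r ?mul0r.
by move=> r rb; rewrite !mxE [f b == r]eq_sym (negbTE rb) mulr0.
Qed.

Lemma Pplus_Pmat_id (x : 'cV[R]_N) :
  (forall a b, f a = f b -> x a ord0 = x b ord0) ->
  Pplus R f *m Pmat R f *m x = x.
Proof.
move=> xf; apply/matrixP => a j; rewrite (ord1 j) mxE.
under eq_bigr => b _ do rewrite Pplus_PmatE.
rewrite (bigID (fun b => f b == f a)) /= [X in _ + X]big1 ?addr0; last first.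
  by move=> b /negbTE; rewrite eq_sym => ->; rewrite !mul0r.
transitivity (\sum_(b | f b == f a) x a ord0 / (csize f (f a))%:R).
  by apply: eq_bigr => b /eqP fb; rewrite fb eqxx mul1r mulrC (xf b a fb).
by rewrite sum_cluster_const mulfVK // pnatr_eq0 -lt0n csize_gt0.
Qed.

Lemma cluster_cost_dot (x : 'cV[R]_N) :
  \sum_z \sum_(i | f i == z) \sum_(j | f j == z)
      (x i ord0 - x j ord0) ^+ 2 / (2 * (csize f z)%:R)
  = (x^T *m (x - Pplus R f *m Pmat R f *m x)) ord0 ord0.
Proof.
transitivity (\sum_i (x i ord0 ^+ 2 -
    \sum_(j | f j == f i) x i ord0 * x j ord0 / (csize f (f i))%:R)); last first.
  rewrite mxE; apply: eq_bigr => i _.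
  rewrite [x^T _ _]mxE [(x - _) _ _]mxE [X in _ = _ * (_ + X)]mxE mxE.
  under [X in _ = _ * (_ - X)]eq_bigr => j _ do rewrite Pplus_PmatE.
  rewrite mulrBr expr2 mulr_sumr big_mkcond /=; congr (_ - _).
  apply: eq_bigr => j _; rewrite eq_sym.
  by have [->|_] := eqVneq (f i) (f j); rewrite ?mul1r ?mul0r ?mulr0 //; ring.
rewrite (partition_big f xpredT) //=; apply: eq_bigr => z _.
have [i0 /eqP fi0|noz] := pickP (fun i => f i == z); last first.
  by rewrite !big_pred0 // => i; rewrite noz.
have cz : (csize f z)%:R != 0 :> R by rewrite -fi0 pnatr_eq0 -lt0n csize_gt0.
transitivity (\sum_(i | f i == z) (x i ord0 ^+ 2 -
    \sum_(j | f j == z) x i ord0 * x j ord0 / (csize f z)%:R)); last first.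
  by apply: eq_bigr => i /eqP ->.
rewrite sumrB.
transitivity (\sum_(i | f i == z) \sum_(j | f j == z)
    (x i ord0 ^+ 2 / (2 * (csize f z)%:R) + x j ord0 ^+ 2 / (2 * (csize f z)%:R))
  - \sum_(i | f i == z) \sum_(j | f j == z) x i ord0 * x j ord0 / (csize f z)%:R).
  rewrite -sumrB; apply: eq_bigr => i _; rewrite -sumrB; apply: eq_bigr => j _.
  by field.
congr (_ - _).
under eq_bigr => i _ do rewrite big_split /= sum_cluster_const.
rewrite big_split /= sum_cluster_const -mulr_suml -mulrDl -big_split /= mulr_suml.
by apply: eq_bigr => i _; field.
Qed.

Lemma kmeans_costE (U : 'M[R]_N) (k : nat) :
  kmeans_cost U k f = \sum_(c < N | (c < k)%N)
    ((col c U)^T *m (col c U - Pplus R f *m Pmat R f *m col c U)) ord0 ord0.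
Proof.
rewrite /kmeans_cost.
under eq_bigr => z _ do under eq_bigr => i _ do under eq_bigr => j _ do rewrite mulr_suml.
under eq_bigr => z _ do under eq_bigr => i _ do rewrite exchange_big /=.
under eq_bigr => z _ do rewrite exchange_big /=.
rewrite exchange_big /=; apply: eq_bigr => c _.
rewrite -cluster_cost_dot; do 3!(apply: eq_bigr => ? _).
by rewrite !mxE.
Qed.

End ClusterAverage.

Lemma mulmx_col_eigen (R : comPzRingType) (N : nat) (L U : 'M[R]_N) (lam : 'I_N -> R)
    (c : 'I_N) :
  L *m U = U *m diag_mx (\row_j lam j) -> L *m col c U = lam c *: col c U.
Proof.
rewrite mul_mx_diag => LU; apply/matrixP => i j.
move/matrixP/(_ i c): LU; rewrite !mxE mulrC => <-.
by apply: eq_bigr => b _; rewrite !mxE.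
Qed.

Lemma col_dot_orthonormal (R : pzRingType) (N : nat) (U : 'M[R]_N) (c : 'I_N) :
  U^T *m U = 1%:M -> ((col c U)^T *m col c U) ord0 ord0 = 1.
Proof.
move=> UU; have : (U^T *m U) c c = 1 by rewrite UU mxE eqxx.
by move <-; rewrite !mxE; apply: eq_bigr => i _; rewrite !mxE.
Qed.

Section ContractionCost.
Variables (R : rcfType) (N n : nat) (W : 'M[R]_N) (part : 'I_N -> 'I_n).
Hypotheses (hW : weighted_graph W) (hP : contraction_partition W part).

Lemma laplacian_kernel_Pplus_Pmat_id (x : 'cV[R]_N) :
  (x^T *m laplacian W *m x) ord0 ord0 = 0 -> Pplus R part *m Pmat R part *m x = x.
Proof.
move=> x0; apply: Pplus_Pmat_id => a b ab; case: hP => _ conn.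
apply: (@connect_invariant _ _ _ (fun v => x v ord0)) (conn a b ab).
by move=> v w /andP [/andP [vw _] _]; exact (laplacian_qform_eq0_edge hW x0 vw).
Qed.

Lemma eigvec_contraction_cost_le (u : 'cV[R]_N) (l e : R) :
  laplacian W *m u = l *: u -> (u^T *m u) ord0 ord0 = 1 -> 0 <= e ->
  normL (laplacian W) (u - Pplus R part *m Pmat R part *m u)
    <= e * normL (laplacian W) u ->
  (u^T *m (u - Pplus R part *m Pmat R part *m u)) ord0 ord0 <= e.
Proof.
move=> Lu uu e0; set y := u - _; set s := (u^T *m y) ord0 ord0.
have uLu : (u^T *m laplacian W *m u) ord0 ord0 = l.
  by rewrite -mulmxA Lu -scalemxAr mxE uu mulr1.
have l0 : 0 <= l by rewrite -uLu laplacian_qform_ge0.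
have [lpos|l_le0] := ltrP 0 l; last first.
  have l00 : l = 0 by apply/le_anti; rewrite l_le0 l0.
  by rewrite /s /y laplacian_kernel_Pplus_Pmat_id ?uLu // subrr mulmx0 mxE.
rewrite /normL uLu => yle.
have s0 : 0 <= s.
  rewrite /s /y -cluster_cost_dot; do 3!apply: sumr_ge0 => ? _.
  by rewrite divr_ge0 ?sqr_ge0 // mulr_ge0 // ler0n.
have yLy : (y^T *m laplacian W *m y) ord0 ord0 <= e ^+ 2 * l.
  by rewrite -ler_sqrt ?mulr_ge0 ?sqr_ge0 // sqrtrM ?sqr_ge0 // sqrtr_sqr ger0_norm.
have : l * s ^+ 2 <= l * e ^+ 2.
  rewrite [X in _ <= X]mulrC; apply: le_trans yLy.
  exact: eigen_component_qform_le (trmx_laplacian hW) Lu uu (laplacian_qform_ge0 hW).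
by rewrite ler_pM2l // ler_sqr ?nnegrE.
Qed.

End ContractionCost.

Theorem proposition3 (R : rcfType) (N n k : nat) (W : 'M[R]_N)
  (lam : 'I_N -> R) (U : 'M[R]_N) (part : 'I_N -> 'I_n) (eps : nat -> R) :
  weighted_graph W ->
  connected_graph W ->
  U^T *m U = 1%:M ->
  laplacian W *m U = U *m diag_mx (\row_j lam j) ->
  (forall i j : 'I_N, (i <= j)%N -> lam i <= lam j) ->
  (k <= N)%N ->
  contraction_partition W part ->
  (forall i, (1 <= i <= k)%N -> 0 <= eps i) ->
  (forall i, (1 <= i <= k)%N ->
     coarse_similar (laplacian W) part (span_first U i) (eps i)) ->
  exists f : 'I_N -> 'I_n, (forall z, exists v, f v = z) /\
    kmeans_cost U k f <= \sum_(1 <= i < k.+1) eps i.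
Proof.
move=> hW _ UU LU _ kN hP eps0 hsim.
exists part; split; first by case: hP.
rewrite kmeans_costE big_add1 /= big_mkord (big_ord_widen _ (fun i => eps i.+1) kN).
apply: ler_sum => c ck; have ck1 : (1 <= c.+1 <= k)%N by [].
apply: (eigvec_contraction_cost_le hW hP (mulmx_col_eigen c LU))
  (col_dot_orthonormal c UU) (eps0 _ ck1) _.
apply: hsim => //; exists (delta_mx c 0); split; last by rewrite colE.
by move=> j cj; rewrite mxE; case: eqP => // jc; rewrite jc ltnn in cj.
Qed.
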